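(* Let $k\ge 1$ and $s>2^{k-1}(2^k+1)$ be integers. Let $H$ be any graph obtained from the vertex-disjoint union of $s$ cliques $K(0),K(1),\dots,K(s-1)$, each on $2k+1$ vertices, by adding, for each $0\le i\le s-1$, a matching $M_i$ of $k$ edges between $K(i)$ and $K(i+1)$, where $K(s)=K(0)$. Then the edge connectivity of $H$ is $2k$ and $m(H)=2^k$.
   Context: All graphs are finite and simple. The edge connectivity is the minimum number of edges whose removal disconnects the graph. For graphs $G_1=(V,E_1)$, $G_2=(V,E_2)$, their symmetric difference is $(V,E_1\oplus E_2)$, where $E_1\oplus E_2$ is the set of edges in exactly one of $E_1,E_2$. A connectivity code for $H=(V,E)$ is a collection of distinct spanning subgraphs $(V,E')$, $E'\subseteq E$, such that the symmetric difference of any two distinct members is a connected graph on $V$; $m(H)$ is the maximum cardinality of a connectivity code for $H$. *)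

From mathcomp Require Import all_boot.
Set Implicit Arguments. Unset Strict Implicit. Unset Printing Implicit Defensive.

(* A finite simple graph on a finType V is given by its edge set
   E : {set {set V}}, each edge being a 2-element subset of V. *)

Section Graphs.
Variable V : finType.

Definition adj_of (F : {set {set V}}) : rel V := fun x y => [set x; y] \in F.

Definition connectedb (F : {set {set V}}) : bool :=
  [forall x, forall y, connect (adj_of F) x y].

(* edge connectivity: minimum number of edges whose removal disconnects
   the graph (default #|E| if no such set exists, irrelevant here) *)
Definition edge_connectivity (E : {set {set V}}) : nat :=
  \big[minn/#|E|]_(F in powerset E | ~~ connectedb (E :\: F)) #|F|.

Definition symdiff (A B : {set {set V}}) : {set {set V}} := (A :\: B) :|: (B :\: A).

(* a connectivity code for (V,E): a collection of (distinct) spanning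
   subgraphs (identified with their edge sets F \subset E) such that the
   symmetric difference of any two distinct members is connected *)
Definition is_conn_code (E : {set {set V}}) (C : {set {set {set V}}}) : bool :=
  [forall F in C, F \subset E] &&
  [forall F1 in C, forall F2 in C, (F1 != F2) ==> connectedb (symdiff F1 F2)].

Definition m_code (E : {set {set V}}) : nat :=
  \max_(C : {set {set {set V}}} | is_conn_code E C) #|C|.

End Graphs.

(* The vertex type of H: clique index i < s and position a < 2k+1. *)
Definition HV (s k : nat) : finType := ('I_s * 'I_(2 * k + 1))%type.

Definition clique_edges (s k : nat) : {set {set HV s k}} :=
  [set e | [exists i : 'I_s, exists a : 'I_(2 * k + 1), exists b : 'I_(2 * k + 1),
     (a != b) && (e == [set ((i, a) : HV s k); (i, b)])]].

Definition is_matching_between (s k : nat) (i : 'I_s) (M : {set {set HV s k}}) : Prop :=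
  [/\ #|M| = k,
      (forall e, e \in M -> exists a b : 'I_(2 * k + 1),
          e = [set ((i, a) : HV s k); (ordS i, b)])
    & (forall e f, e \in M -> f \in M -> e != f -> [disjoint e & f])].

Definition H_edges (s k : nat) (M : 'I_s -> {set {set HV s k}}) : {set {set HV s k}} :=
  clique_edges s k :|: \bigcup_(i : 'I_s) M i.

(* The matchings [M i] are the only edges between consecutive cliques, so [M i :|: M j] is a cut
   of 2k edges for i != j. Conversely K_(2k+1) survives the deletion of fewer than 2k edges, and
   such a deletion empties at most one matching, which leaves the cliques joined along a path.

   If a code has more than 2^k members, pigeonhole among 2^k + 1 of them yields, for each i, two
   members agreeing on [M i]. Distinct i, j cannot yield the same pair: its symmetric difference
   would avoid the cut [M i :|: M j]. Hence s <= C(2^k + 1, 2) = 2^(k-1) (2^k + 1).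

   Conversely the edges split into k edge-disjoint connected spanning pieces, each taking one edge
   of every matching and a spanning subgraph of every clique; the 2^k unions of pieces form a
   code. *)

From HB Require Import structures.
From mathcomp Require Import all_boot zify.
Set Implicit Arguments. Unset Strict Implicit. Unset Printing Implicit Defensive.

(* Lets [bigD1] split the [\big[minn/_]] defining [edge_connectivity]. *)
HB.instance Definition _ := SemiGroup.isComLaw.Build nat minn minnA minnC.

Section EdgeSets.
Variable V : finType.
Implicit Types (E F G X : {set {set V}}) (C : {set {set {set V}}}).

Lemma adj_of_sym F : symmetric (adj_of F).
Proof. by move=> x y; rewrite /adj_of setUC. Qed.

Lemma connect_adj_of_sym F x y : connect (adj_of F) x y = connect (adj_of F) y x.
Proof. exact/sym_connect_sym/adj_of_sym. Qed.

Lemma connect_adj_of_sub F G x y :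
  F \subset G -> connect (adj_of F) x y -> connect (adj_of G) x y.
Proof.
move=> sFG; apply: connect_sub => u v uv; apply: connect1.
exact: (subsetP sFG).
Qed.

Lemma connectedb_sub F G : F \subset G -> connectedb F -> connectedb G.
Proof.
move=> sFG /forallP cF; apply/forallP => x; apply/forallP => y.
exact/(connect_adj_of_sub sFG)/forallP.
Qed.

Lemma set2_eq (x y x' y' : V) :
  [set x; y] = [set x'; y'] -> (x = x' /\ y = y') \/ (x = y' /\ y = x').
Proof.
move=> eq.
have /set2P xx' : x \in [set x'; y'] by rewrite -eq set21.
have /set2P yy' : y \in [set x'; y'] by rewrite -eq set22.
have /set2P x'x : x' \in [set x; y] by rewrite eq set21.
have /set2P y'y : y' \in [set x; y] by rewrite eq set22.
by case: xx' yy' x'x y'y => ? [] ? [] ? [] ?; subst; auto.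
Qed.

Lemma connect_closed_set F (S : {pred V}) x y :
  (forall u v, [set u; v] \in F -> u \in S -> v \in S) ->
  connect (adj_of F) x y -> x \in S -> y \in S.
Proof.
move=> noexit xy xS; suff clS : closed (adj_of F) S by rewrite -(closed_connect clS xy).
by move=> u v uv; apply/idP/idP; apply: noexit; rewrite // /adj_of setUC.
Qed.

(* The edge [ab] and the paths [a z b] (z in Z) are edge-disjoint, so [F] must hit each of them. *)
Lemma connect_common_neighbours E F (Z : {set V}) a b :
  a != b -> a \notin Z -> b \notin Z -> [set a; b] \in E ->
  (forall z, z \in Z -> [set a; z] \in E /\ [set z; b] \in E) ->
  #|F| <= #|Z| -> connect (adj_of (E :\: F)) a b.
Proof.
move=> ab aZ bZ abE zE cardF; apply: contraT => nab.
pose g z := if z == b then [set a; b] else if [set a; z] \in F then [set a; z] else [set z; b].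
have gF z : z \in b |: Z -> g z \in F.
  rewrite /g; case: eqP => [_ _|_ /setU1P[//|/zE[azE zbE]]].
    by apply: contraT => abF; case/negP: nab; apply: connect1; rewrite /adj_of inE abF.
  case: ifP => // azF; apply: contraT => zbF; case/negP: nab.
  apply: (@connect_trans _ _ z); apply: connect1; rewrite /adj_of inE ?azF ?zbF //.
have gmem z z' : z \in b |: Z -> z' \in Z -> z' \in g z -> z' = z.
  move=> _ z'Z; rewrite /g; case: eqP => _; last case: ifP => _.
  - by case/set2P=> eqz'; move: z'Z; rewrite eqz' ?(negbTE aZ) ?(negbTE bZ).
  - by case/set2P=> // eqz'; move: z'Z; rewrite eqz' (negbTE aZ).
  - by case/set2P=> // eqz'; move: z'Z; rewrite eqz' (negbTE bZ).
have gz z : z \in Z -> z \in g z.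
  move=> zZ; rewrite /g; case: eqP => [eqzb|_]; first by move: bZ; rewrite -eqzb zZ.
  by case: ifP; rewrite ?set21 ?set22.
have g_inj : {in b |: Z &, injective g}.
  move=> z1 z2 /setU1P[->|z1Z] /setU1P[->|z2Z] // eqg.
  - by apply: esym; apply: gmem (z2Z) _; rewrite ?setU11 // eqg gz.
  - by apply: gmem (z1Z) _; rewrite ?setU11 // -eqg gz.
  - by apply: gmem (z1Z) _; rewrite ?setU1r // -eqg gz.
have : g @: (b |: Z) \subset F by apply/subsetP => _ /imsetP[z zZ ->]; apply: gF.
by move/subset_leq_card; rewrite card_in_imset // cardsU1 bZ ltnNge cardF.
Qed.

Lemma edge_connectivity_le E F :
  F \subset E -> ~~ connectedb (E :\: F) -> edge_connectivity E <= #|F|.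
Proof.
by move=> sFE ncF; rewrite /edge_connectivity (bigD1 F) ?geq_minl // inE sFE.
Qed.

Lemma edge_connectivity_ge E n : n <= #|E| ->
  (forall F, F \subset E -> #|F| < n -> connectedb (E :\: F)) ->
  n <= edge_connectivity E.
Proof.
move=> nE robust; apply: (big_ind (leq n)) => // [x y nx ny|F /andP[]].
  by rewrite leq_min nx ny.
by rewrite inE leqNgt => sFE; apply: contra => /(robust _ sFE).
Qed.

Lemma m_code_ge E C : is_conn_code E C -> #|C| <= m_code E.
Proof. exact: leq_bigmax_cond. Qed.

Lemma m_code_le E n : (forall C, is_conn_code E C -> #|C| <= n) -> m_code E <= n.
Proof. by move=> small; apply/bigmax_leqP. Qed.

Lemma symdiffC F G : symdiff F G = symdiff G F.
Proof. exact: setUC. Qed.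

(* Two members of a code agreeing on [X] have their symmetric difference inside [E :\: X]. *)
Lemma conn_code_agree E C F G X : is_conn_code E C -> F \in C -> G \in C -> F != G ->
  F :&: X = G :&: X -> connectedb (E :\: X).
Proof.
case/andP=> /forall_inP sub /forall_inP conn FC GC FG FGX.
apply: connectedb_sub (implyP (forall_inP (conn F FC) G GC) FG).
apply/subsetP => e; rewrite !inE => /orP[]/andP[e_out e_in].
  rewrite (subsetP (sub F FC)) // andbT; apply: contra e_out => eX.
  by move/setP/(_ e): FGX; rewrite !inE e_in eX !andbT => <-.
rewrite (subsetP (sub G GC)) // andbT; apply: contra e_out => eX.
by move/setP/(_ e): FGX; rewrite !inE e_in eX !andbT => ->.
Qed.

Lemma restr_collision (D : {set {set {set V}}}) X : 2 ^ #|X| < #|D| ->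
  exists F G, [/\ F \in D, G \in D, F != G & F :&: X = G :&: X].
Proof.
move=> bigD; have /dinjectivePn[F FD [G]] : ~~ dinjectiveb (fun F => F :&: X) D.
  apply/dinjectiveP => /card_in_imset cardD; move: bigD; rewrite -cardD -card_powerset.
  apply/negP; rewrite -leqNgt subset_leq_card //.
  by apply/subsetP => _ /imsetP[F _ ->]; rewrite inE subsetIr.
by rewrite !inE => /andP[GF GD] FGX; exists F, G; rewrite eq_sym.
Qed.

(* Pigeonhole: if [2 ^ n < #|C|], each [N i] sees two members of [C] that agree on it, and
   two distinct indices cannot see the same pair since [N i :|: N j] is a cut. *)
Lemma conn_code_cuts E C (I : finType) (N : I -> {set {set V}}) n :
  is_conn_code E C -> (forall i, #|N i| <= n) ->
  (forall i j, i != j -> ~~ connectedb (E :\: (N i :|: N j))) ->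
  2 ^ n < #|C| -> #|I| <= 'C((2 ^ n).+1, 2).
Proof.
move=> codeC smallN cuts bigC.
have [D sDC cardD] : exists2 D : {set {set {set V}}}, D \subset C & #|D| = (2 ^ n).+1.
  have : 0 < #|[set D : {set {set {set V}}} | D \subset C & #|D| == (2 ^ n).+1]|.
    by rewrite cards_draws bin_gt0.
  by case/card_gt0P => D; rewrite inE => /andP[sDC /eqP cardD]; exists D.
pose agree i (P : {set {set {set V}}}) :=
  [&& P \subset D, #|P| == 2 & [forall F in P, forall G in P, F :&: N i == G :&: N i]].
have agreeP i : exists P, agree i P.
  have bigD : 2 ^ #|N i| < #|D| by rewrite cardD ltnS leq_pexp2l.
  have [F [G [FD GD FG FGi]]] := restr_collision bigD.
  exists [set F; G]; rewrite /agree cards2 FG eqxx.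
  rewrite subUset !sub1set FD GD /=.
  by apply/forall_inP => _ /set2P[]->; apply/forall_inP => _ /set2P[]->; rewrite ?FGi.
pose pair i := xchoose (agreeP i).
have pairP i : agree i (pair i) := xchooseP (agreeP i).
have pair_inj : injective pair.
  move=> i j eqij; apply/eqP; apply: contraT => ij; case/negP: (cuts i j ij).
  have /and3P[sPD /cards2P[F [G [FG defP]]] agi] := pairP i.
  have /and3P[_ _ agj] := pairP j; rewrite -eqij in agj.
  have [FP GP] : F \in pair i /\ G \in pair i by rewrite defP set21 set22.
  have agreeFG l : [forall F in pair i, forall G in pair i, F :&: N l == G :&: N l] ->
      F :&: N l = G :&: N l.
    by move/forall_inP/(_ F FP)/forall_inP/(_ G GP)/eqP.
  apply: (conn_code_agree codeC _ _ FG); rewrite ?(subsetP sDC) ?(subsetP sPD) //.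
  by rewrite !setIUr (agreeFG i agi) (agreeFG j agj).
have : pair @: [set: I] \subset [set P : {set {set {set V}}} | P \subset D & #|P| == 2].
  by apply/subsetP => _ /imsetP[i _ ->]; rewrite inE; case/and3P: (pairP i) => -> ->.
by move/subset_leq_card; rewrite card_imset // cardsT cards_draws cardD.
Qed.

(* Two distinct unions of pieces differ by a whole piece, which is connected. *)
Lemma conn_code_pieces E (I : finType) (P : I -> {set {set V}}) :
  (forall j, P j \subset E) -> (forall j, connectedb (P j)) -> (forall j, P j != set0) ->
  (forall j l, j != l -> [disjoint P j & P l]) -> 2 ^ #|I| <= m_code E.
Proof.
move=> sPE connP P_neq0 disjP.
pose U (T : {set I}) := \bigcup_(j in T) P j.
have sep T T' : T != T' -> exists j, P j \subset symdiff (U T) (U T').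
  have sub_symdiff j (T1 T2 : {set I}) :
      j \in T1 -> j \notin T2 -> P j \subset symdiff (U T1) (U T2).
    move=> jT1 jT2; apply/subsetP => e ej; rewrite !inE; apply/orP; left; apply/andP; split.
      apply/bigcupP => -[l lT2]; apply/negP; rewrite (disjointFr (disjP j l _) ej) //.
      by apply: contraNneq jT2 => ->.
    by apply/bigcupP; exists j.
  rewrite eqEsubset negb_and => /orP[]/subsetPn[j jT jT']; exists j.
    exact: sub_symdiff.
  by rewrite symdiffC; apply: sub_symdiff.
have U_inj : injective U.
  move=> T T' eqU; apply/eqP; apply: contraT => /sep[j].
  by rewrite eqU /symdiff setDv setU0 subset0 (negbTE (P_neq0 j)).
have codeU : is_conn_code E (U @: powerset [set: I]).
  apply/andP; split; apply/forall_inP => _ /imsetP[T _ ->].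
    by apply/bigcupsP => j _; apply: sPE.
  apply/forall_inP => _ /imsetP[T' _ ->]; apply/implyP => neU.
  have [j sPj] : exists j, P j \subset symdiff (U T) (U T').
    by apply: sep; apply: contraNneq neU => ->.
  exact: connectedb_sub sPj (connP j).
by have := m_code_ge codeU; rewrite card_imset // card_powerset cardsT.
Qed.

End EdgeSets.

Section CyclicPaths.
Variables (T : finType) (e : rel T).

Lemma connect_nat_path (h : nat -> T) a b :
  a <= b -> (forall m, a <= m < b -> connect e (h m) (h m.+1)) -> connect e (h a) (h b).
Proof.
elim: b => [|b IH]; first by rewrite leqn0 => /eqP->.
rewrite leq_eqVlt => /orP[/eqP->//|ab] step.
apply: connect_trans (step b _); last lia.
by apply: IH => // m /andP[am mb]; apply: step; lia.
Qed.

Lemma connect_ordS_cycle n (f : 'I_n -> T) (d : 'I_n) :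
  connect_sym e -> (forall i, i != d -> connect e (f i) (f (ordS i))) ->
  forall i j, connect e (f i) (f j).
Proof.
case: n f d => [|n] f d; first by case: d.
move=> sym_e link; have symE : forall x y, connect e x y = connect e y x := sym_e.
pose h m := f (inord m).
have hE (i : 'I_n.+1) : h i = f i by rewrite /h inord_val.
have step m : m < n -> inord m != d -> connect e (h m) (h m.+1).
  move=> mn md; rewrite /h; have -> : inord m.+1 = ordS (inord m : 'I_n.+1).
    by apply: val_inj; rewrite /= !inordK ?modn_small //; lia.
  exact: link.
have toroot (i : 'I_n.+1) : connect e (f i) (f ord0).
  have neq_d (m : nat) : m <= n -> m != d -> inord m != d.
    by move=> mn md; apply: contra md => /eqP <-; rewrite inordK.
  have [ilt dlt] := (ltn_ord i, ltn_ord d).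
  case: (leqP i d) => [id|di].
    rewrite symE -!hE; apply: connect_nat_path => // m /andP[_ mi].
    by apply: step; [lia | apply: neq_d; [lia | rewrite neq_ltn (leq_trans mi id)]].
  apply: connect_trans (_ : connect e (f i) (f ord_max)) _.
    rewrite -hE -(hE ord_max); apply: connect_nat_path; first by rewrite -ltnS.
    move=> m /andP[im mn]; apply: step => //.
    by apply: neq_d; [exact: ltnW | rewrite neq_ltn (leq_trans di im) orbT].
  have -> : ord0 = ordS (ord_max : 'I_n.+1) by apply: val_inj; rewrite /= modnn.
  by apply: link; rewrite neq_ltn /= (leq_trans di (_ : i <= n)) ?orbT.
by move=> i j; apply: connect_trans (toroot i) _; rewrite symE.
Qed.

End CyclicPaths.

Lemma bin2_pow2S k : 0 < k -> 'C((2 ^ k).+1, 2) = 2 ^ k.-1 * (2 ^ k + 1).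
Proof. by case: k => // k _; rewrite bin2 /= expnS mulnCA mul2n doubleK mulnC addn1. Qed.

(* Split the vertices [0..2k] of K_(2k+1) into 0 and the pairs {2j+1, 2j+2}, j < k. An edge at 0
   or inside a pair is owned by that pair; an edge between two pairs is owned by the lower one if
   its ends have the same parity and by the higher one otherwise. Every vertex outside a pair is
   then joined to one of its two vertices by an edge the pair owns, so each owner class spans. *)
Definition pair_index (p : nat) := (p - 1) %/ 2.
Definition pair_side (p : nat) := (p - 1) %% 2.
Definition owner (x y : nat) : nat :=
  if x == 0 then pair_index y else if y == 0 then pair_index x
  else if pair_index x == pair_index y then pair_index x
  else if pair_side x == pair_side y then minn (pair_index x) (pair_index y)
  else maxn (pair_index x) (pair_index y).

Lemma owner_sym x y : owner x y = owner y x.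
Proof. by rewrite /owner /pair_index /pair_side; repeat case: ifP => /eqP ?; lia. Qed.

Lemma owner_pair j : owner (2 * j + 2) (2 * j + 1) = j.
Proof. by rewrite /owner /pair_index /pair_side; repeat case: ifP => /eqP ?; lia. Qed.

Lemma owner_spans j x : x <> 2 * j + 1 ->
  owner (2 * j + 1) x = j \/ (x <> 2 * j + 2 /\ owner (2 * j + 2) x = j).
Proof. by move=> ?; rewrite /owner /pair_index /pair_side; repeat case: ifP => /eqP ?; lia. Qed.

Section CycleOfCliques.
Variables (k s : nat) (M : 'I_s -> {set {set HV s k}}).
Hypothesis s_ge3 : 3 <= s.
Hypothesis matchingM : forall i : 'I_s, is_matching_between i (M i).
Local Notation V := (HV s k).
Local Notation E := (H_edges M).

Let i0 : 'I_s := Ordinal (leq_trans (isT : 0 < 3) s_ge3).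
Let p0 : 'I_(2 * k + 1) := Ordinal (ltn_addl (2 * k) (ltn0Sn 0)).

Lemma ordS_val (i : 'I_s) : (ordS i : nat) = if i.+1 == s then 0 else i.+1.
Proof.
rewrite /=; case: eqP => [->|ne]; first by rewrite modnn.
by rewrite modn_small //; have := ltn_ord i; lia.
Qed.

Lemma ordS_neq (i : 'I_s) : ordS i != i.
Proof. by apply/eqP => /(congr1 (@nat_of_ord _)); rewrite ordS_val; case: eqP => /=; lia. Qed.

Lemma ordSS_neq (i : 'I_s) : ordS (ordS i) != i.
Proof.
apply/eqP => /(congr1 (@nat_of_ord _)); have := ltn_ord i.
by rewrite !ordS_val; case: (i.+1 =P s) => /= ?; case: eqP => /= ?; lia.
Qed.

Lemma match_form (i : 'I_s) e : e \in M i ->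
  exists a b : 'I_(2 * k + 1), e = [set ((i, a) : V); (ordS i, b)].
Proof. by case: (matchingM i) => _ + _; apply. Qed.

Lemma match_ends (i : 'I_s) (x y : V) : [set x; y] \in M i -> x.1 != y.1.
Proof.
case/match_form=> a [b] /set2_eq[[-> ->]|[-> ->]] /=; rewrite ?(ordS_neq i) //.
by rewrite eq_sym ordS_neq.
Qed.

Lemma match_disjoint (i j : 'I_s) : i != j -> [disjoint M i & M j].
Proof.
move=> ij; rewrite -setI_eq0 -subset0; apply/subsetP => e /setIP[/match_form[a [b ->]]].
case/match_form=> c [d] /set2_eq[[[eqij _] _]|[[eqi _] [eqj _]]].
  by rewrite eqij eqxx in ij.
by move: (ordSS_neq j); rewrite -eqi eqj eqxx.
Qed.

Lemma card_match (i : 'I_s) : #|M i| = k.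
Proof. by case: (matchingM i). Qed.

Lemma card_match2 (i j : 'I_s) : i != j -> #|M i :|: M j| = 2 * k.
Proof.
move=> ij; rewrite cardsU disjoint_setI0 ?match_disjoint // cards0 subn0.
by rewrite !card_match mul2n addnn.
Qed.

Lemma clique_edge (c : 'I_s) (a b : 'I_(2 * k + 1)) :
  a != b -> [set ((c, a) : V); (c, b)] \in E.
Proof.
move=> ab; apply/setUP; left; rewrite inE.
by apply/existsP; exists c; apply/existsP; exists a; apply/existsP; exists b; rewrite ab eqxx.
Qed.

Lemma match_edge (i : 'I_s) e : e \in M i -> e \in E.
Proof. by move=> eM; apply/setUP; right; apply/bigcupP; exists i. Qed.

Lemma match_sub (i : 'I_s) : M i \subset E.
Proof. by apply/subsetP => e; apply: match_edge. Qed.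

Lemma cut_edge (i j : 'I_s) (x y : V) : i < j -> [set x; y] \in E ->
  i < x.1 <= j -> ~~ (i < y.1 <= j) -> [set x; y] \in M i :|: M j.
Proof.
move=> ij /setUP[|/bigcupP[l _ xyM]].
  rewrite inE => /existsP[c /existsP[a /existsP[b /andP[_ /eqP /set2_eq]]]].
  by case=> -[-> ->] /= ->.
move=> xS yS; suff : (l == i) || (l == j) by case/orP => /eqP <-; rewrite inE xyM ?orbT.
have [[lt_i lt_j] lt_l] := (ltn_ord i, ltn_ord j, ltn_ord l).
rewrite -!val_eqE /=; move: xS yS (ordS_val l).
by have [a [b /set2_eq[] [-> ->]]] := match_form xyM => /=; case: ifP => /eqP; lia.
Qed.

Lemma cut_pair (i j : 'I_s) : i != j -> ~~ connectedb (E :\: (M i :|: M j)).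
Proof.
wlog ij : i j / i < j.
  move=> cut; rewrite neq_ltn => /orP[ij|ji]; first by apply: cut; rewrite // neq_ltn ij.
  by rewrite setUC; apply: cut; rewrite // neq_ltn ji.
move=> _; apply/negP => /forallP/(_ (j, p0))/forallP/(_ (i, p0)) ji.
suff : (i, p0) \in [pred v : V | i < v.1 <= j] by rewrite inE ltnn.
apply: connect_closed_set ji _; last by rewrite inE /= ij leqnn.
move=> u v; rewrite in_setD => /andP[notM uvE] uS; apply: contraT => vS.
by move: notM; rewrite (cut_edge ij uvE uS vS).
Qed.

Lemma connectedb_cliques_cycle F (d : 'I_s) (p : 'I_(2 * k + 1)) :
  (forall c a b, connect (adj_of F) ((c, a) : V) (c, b)) ->
  (forall c, c != d -> connect (adj_of F) ((c, p) : V) (ordS c, p)) -> connectedb F.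
Proof.
move=> inside link; apply/forallP => -[c a]; apply/forallP => -[c' b].
apply: connect_trans (inside c a p) _; apply: connect_trans (inside c' p b).
exact: (connect_ordS_cycle (f := fun c => (c, p) : V) (connect_adj_of_sym F) link).
Qed.

Lemma connect_clique_setD (F : {set {set V}}) (c : 'I_s) (a b : 'I_(2 * k + 1)) :
  #|F| < 2 * k -> connect (adj_of (E :\: F)) ((c, a) : V) (c, b).
Proof.
move=> smallF; have [->|ab] := eqVneq a b; first exact: connect0.
have inj_c : injective (fun z => (c, z) : V) by move=> z z' [].
pose Z := [set ((c, z) : V) | z in ~: [set a; b]].
have notZ z : z \in [set a; b] -> ((c, z) : V) \notin Z.
  by move=> zab; apply/imsetP => -[z' + [eqz]]; rewrite inE -eqz zab.
apply: (connect_common_neighbours (Z := Z)).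
- by apply: contra_neq ab => -[].
- by apply: notZ; rewrite set21.
- by apply: notZ; rewrite set22.
- exact: clique_edge.
- move=> w /imsetP[z]; rewrite in_setC in_set2 negb_or => /andP[za zb] ->.
  by split; apply: clique_edge; rewrite // eq_sym.
- by rewrite /Z card_imset // [#|~: _|]cardsCs setCK cards2 ab card_ord; lia.
Qed.

Lemma connectedb_setD_small (F : {set {set V}}) : #|F| < 2 * k -> connectedb (E :\: F).
Proof.
move=> smallF.
have [d alive] : exists d, forall c, c != d -> ~~ (M c \subset F).
  case: (pickP [pred c | M c \subset F]) => [d sMdF|none]; last first.
    by exists i0 => c _; apply/negbT/none.
  exists d => c cd; apply/negP => sMcF.
  have : M c :|: M d \subset F by rewrite subUset sMcF.
  by move/subset_leq_card; rewrite card_match2 // leqNgt smallF.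
apply: (connectedb_cliques_cycle (d := d) (p := p0)) => [c a b|c /alive].
  exact: connect_clique_setD.
case/subsetPn => e eM eF; have [a [b eab]] := match_form eM; subst e.
apply: connect_trans (connect_clique_setD c p0 a smallF) _.
apply: connect_trans (connect_clique_setD _ b p0 smallF); apply: connect1.
by rewrite /adj_of in_setD eF (match_edge eM).
Qed.

Lemma edge_connectivity_cycle_of_cliques : edge_connectivity E = 2 * k.
Proof.
pose i1 : 'I_s := Ordinal (leq_trans (isT : 2 < 3) s_ge3).
have i01 : i0 != i1 by [].
have sME : M i0 :|: M i1 \subset E by rewrite subUset !match_sub.
apply/eqP; rewrite eqn_leq -{1 2}(card_match2 i01).
rewrite (edge_connectivity_le sME (cut_pair i01)) /=.
apply: edge_connectivity_ge => [|F _]; first exact: subset_leq_card.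
by rewrite card_match2 //; apply: connectedb_setD_small.
Qed.

Definition match_nth (i : 'I_s) (j : nat) : {set V} := nth set0 (enum (M i)) j.

Definition clique_piece (j : nat) : {set {set V}} :=
  [set [set x; y] | x : V, y : V
     in [pred y : V | [&& x.1 == y.1, x.2 != y.2 & owner x.2 y.2 == j]]].

Definition piece (j : nat) : {set {set V}} := clique_piece j :|: [set match_nth i j | i in 'I_s].

Lemma match_nth_in (i : 'I_s) j : j < k -> match_nth i j \in M i.
Proof. by move=> jk; rewrite /match_nth -mem_enum mem_nth // -cardE card_match. Qed.

Lemma clique_piece_edge j (c : 'I_s) (a b : 'I_(2 * k + 1)) :
  a != b -> owner a b = j -> [set ((c, a) : V); (c, b)] \in clique_piece j.
Proof. by move=> ab abj; apply: imset2_f; rewrite // inE /= eqxx ab abj eqxx. Qed.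

Lemma clique_piece_ends j (x y : V) :
  [set x; y] \in clique_piece j -> x.1 = y.1 /\ owner x.2 y.2 = j.
Proof.
case/imset2P=> x' y' _ /and3P[/eqP x'y' _ /eqP <-].
by case/set2_eq=> -[-> ->]; rewrite // owner_sym.
Qed.

Lemma match_nth_notin_clique_piece (i : 'I_s) j l :
  j < k -> match_nth i j \notin clique_piece l.
Proof.
move=> jk; apply/negP => /[dup] /imset2P[x y _ _ eq].
rewrite eq => /clique_piece_ends[xy _].
by have := match_nth_in i jk; rewrite eq => /match_ends; rewrite xy eqxx.
Qed.

Lemma piece_mem_eq j l e : j < k -> l < k -> e \in piece j -> e \in piece l -> j = l.
Proof.
move=> jk lk /setUP[ej|/imsetP[i _ ->]] /setUP[el|/imsetP[i' _ eq]].
- case/imset2P: ej el => x y _ /and3P[_ _ /eqP <-] ->.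
  by case/clique_piece_ends.
- by move: ej; rewrite eq (negbTE (match_nth_notin_clique_piece _ _ lk)).
- by move: el; rewrite (negbTE (match_nth_notin_clique_piece _ _ jk)).
have [ii'|ii'] := eqVneq i i'; last first.
  have := disjointFr (match_disjoint ii') (match_nth_in i jk).
  by rewrite eq match_nth_in.
move: eq; rewrite /match_nth ii' => /eqP.
by rewrite nth_uniq ?enum_uniq -?cardE ?card_match // => /eqP.
Qed.

Lemma piece_sub j : j < k -> piece j \subset E.
Proof.
move=> jk; apply/subsetP => e /setUP[|/imsetP[i _ ->]]; last exact/match_edge/match_nth_in.
case/imset2P=> -[c a] -[c' b] _ /and3P[/eqP /= <- ab _] ->.
exact: clique_edge.
Qed.

Lemma piece_conn j : j < k -> connectedb (piece j).
Proof.
move=> jk; have [aj_lt bj_lt] : 2 * j + 1 < 2 * k + 1 /\ 2 * j + 2 < 2 * k + 1 by lia.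
pose aj := Ordinal aj_lt; pose bj := Ordinal bj_lt.
have adj c (a b : 'I_(2 * k + 1)) :
    a != b -> owner a b = j -> connect (adj_of (piece j)) ((c, a) : V) (c, b).
  by move=> ab abj; apply: connect1; rewrite /adj_of in_setU clique_piece_edge.
have to_aj c x : connect (adj_of (piece j)) ((c, x) : V) (c, aj).
  have [->|xa] := eqVneq x aj; first exact: connect0.
  have /owner_spans[xj|[xb xj]] : (x : nat) <> 2 * j + 1.
    by move=> eqx; case/eqP: xa; apply: val_inj.
    by rewrite connect_adj_of_sym; apply: adj; rewrite // eq_sym.
  have ba : bj != aj by apply/eqP => /(congr1 (@nat_of_ord _)) /=; lia.
  apply: connect_trans _ (adj _ _ _ ba (owner_pair j)); rewrite connect_adj_of_sym.
  by apply: (adj c bj x) xj; apply/eqP => eqx; apply: xb; rewrite -eqx.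
apply: (connectedb_cliques_cycle (d := i0) (p := aj)) => [c a b | c _].
  by apply: connect_trans (to_aj c a) _; rewrite connect_adj_of_sym to_aj.
have [a [b eab]] := match_form (match_nth_in c jk).
have ab_adj : adj_of (piece j) ((c, a) : V) (ordS c, b).
  by rewrite /adj_of in_setU -eab imset_f ?orbT.
apply: connect_trans _ (connect_trans (connect1 ab_adj) (to_aj _ b)).
by rewrite connect_adj_of_sym to_aj.
Qed.

Lemma m_code_cycle_of_cliques_ge : 2 ^ k <= m_code E.
Proof.
rewrite -[k in 2 ^ k]card_ord.
apply: (conn_code_pieces (P := fun j : 'I_k => piece j)) => [j|j|j|j l jl].
- exact: piece_sub.
- exact: piece_conn.
- by apply/set0Pn; exists (match_nth i0 j); rewrite in_setU imset_f ?orbT.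
rewrite -setI_eq0 -subset0; apply/subsetP => e /setIP[ej el].
by move: jl; rewrite (ord_inj (piece_mem_eq (ltn_ord j) (ltn_ord l) ej el)) eqxx.
Qed.

Lemma m_code_cycle_of_cliques_le : 0 < k -> 2 ^ k.-1 * (2 ^ k + 1) < s -> m_code E <= 2 ^ k.
Proof.
move=> k_gt0 s_big; apply: m_code_le => C codeC; rewrite leqNgt; apply/negP => bigC.
have := conn_code_cuts codeC (fun i => eq_leq (card_match i)) cut_pair bigC.
by rewrite card_ord bin2_pow2S // leqNgt s_big.
Qed.

End CycleOfCliques.

Theorem mainTheorem11 (k s : nat) (M : 'I_s -> {set {set HV s k}}) :
  1 <= k -> 2 ^ k.-1 * (2 ^ k + 1) < s ->
  (forall i : 'I_s, is_matching_between i (M i)) ->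
  edge_connectivity (H_edges M) = 2 * k /\ m_code (H_edges M) = 2 ^ k.
Proof.
move=> k_gt0 s_big matchingM.
have s_ge3 : 3 <= s.
  by apply: leq_trans s_big; rewrite ltnS -[2]mul1n leq_mul ?expn_gt0 // addn1 ltnS expn_gt0.
split; first exact: edge_connectivity_cycle_of_cliques.
apply/eqP; rewrite eqn_leq m_code_cycle_of_cliques_ge // andbT.
exact: m_code_cycle_of_cliques_le.
Qed.
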